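(* Assume the setting and hypotheses (i)–(iii) of the following context, with parameters $\alpha,\alpha_0,\beta'>0$. Let $w_{\min}:=\min_i w_i$, and let $$q:=\frac{2w_{\max}}{w_{\min}}\Big[\frac{2\alpha}{\sqrt d}\Big(1+\alpha_0\sqrt{\tfrac kd}\Big)^2+\beta'\Big],$$ and assume $q<1/2$. Let $\Psi$ be a tensor with $\psi:=\|\Psi\|\le w_{\min}/6$, and $\hat T=T+\Psi$. Fix $j\in[k]$ and unit vectors $\hat a,\hat b$ with $\epsilon_0:=\max\{\mathrm{dist}(\hat a,a_j),\mathrm{dist}(\hat b,b_j)\}$ satisfying $$\epsilon_0\le\min\Big\{\frac{\beta'}{\alpha_0},\ \sqrt{\frac{w_{\min}}{6w_{\max}}},\ \frac{w_{\min}q}{4w_{\max}},\ \frac{2w_{\max}}{w_{\min}q}\Big(\frac{w_{\min}}{6w_{\max}}-\alpha\frac{\sqrt k}{d}\Big)\Big\}.$$ Let $\hat c:=\hat T(\hat a,\hat b,I)/\|\hat T(\hat a,\hat b,I)\|$ and $\mathrm{Const}:=\frac{2}{w_{\min}}\big(\psi+w_{\max}\alpha\frac{\sqrt k}{d}\big)$. Then $\mathrm{dist}(\hat c,c_j)\le \mathrm{Const}+q\epsilon_0$. Moreover, if $\mathrm{dist}(\hat c,c_j)\le\epsilon_0$, then $\hat w:=\hat T(\hat a,\hat b,\hat c)$ satisfies $|\hat w-w_j|\le \frac{w_{\min}}{2}\mathrm{Const}+w_{\min}q\epsilon_0$.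
   Context: Setting: $w_1,\dots,w_k>0$, $w_{\max}=\max_i w_i$; $a_i,b_i,c_i\in\mathbb{R}^d$ unit vectors; $T=\sum_{i\in[k]}w_i a_i\otimes b_i\otimes c_i$; $A=[a_1\cdots a_k]$, $B$, $C$ similarly. Hypotheses: (i) $\max_{i\ne j}\max\{|\langle a_i,a_j\rangle|,|\langle b_i,b_j\rangle|,|\langle c_i,c_j\rangle|\}\le\alpha/\sqrt d$; (ii) $\max\{\|A\|,\|B\|,\|C\|\}\le 1+\alpha_0\sqrt{k/d}$; (iii) $\|T\|\le\alpha_0w_{\max}$ and for every $j$, $\|\sum_{i\ne j}w_i\langle a_i,a_j\rangle\langle b_i,b_j\rangle c_i\|\le\alpha w_{\max}\sqrt k/d$. Multilinear form: $T(u,v,w)=\sum_{i,j,l}T_{ijl}u_iv_jw_l$; $T(u,v,I)$ is the vector with $l$-th entry $\sum_{i,j}T_{ijl}u_iv_j$. Tensor spectral norm $\|T\|=\sup_{\|u\|=\|v\|=\|w\|=1}|T(u,v,w)|$; matrix norms are spectral norms. $\mathrm{dist}(u,v):=\sup_{z\perp u}\frac{\langle z,v\rangle}{\|z\|\|v\|}$. *)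

(* classical reals. Vectors in R^n are functions nat -> R of which
   only indices 0..n-1 matter; 3-tensors in R^{d x d x d} are nat -> nat -> nat -> R. *)
From Stdlib Require Import Reals Lra Lia Classical ClassicalEpsilon.
Open Scope R_scope.

Definition vec := nat -> R.
Definition tensor3 := nat -> nat -> nat -> R.

Fixpoint rsum (n : nat) (f : nat -> R) : R :=
  match n with O => 0 | S m => rsum m f + f m end.

Fixpoint rmax_upto (n : nat) (f : nat -> R) : R :=
  match n with O => f O | S m => Rmax (rmax_upto m f) (f n) end.
(* max_{i < k} f i  (meaningful for k >= 1) *)
Definition rmax_lt (k : nat) (f : nat -> R) : R := rmax_upto (k - 1) f.
Fixpoint rmin_upto (n : nat) (f : nat -> R) : R :=
  match n with O => f O | S m => Rmin (rmin_upto m f) (f n) end.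
Definition rmin_lt (k : nat) (f : nat -> R) : R := rmin_upto (k - 1) f.

Definition dot (d : nat) (u v : vec) : R := rsum d (fun i => u i * v i).
Definition vnorm (d : nat) (u : vec) : R := sqrt (dot d u u).
Definition is_unit (d : nat) (u : vec) : Prop := vnorm d u = 1.

(* supremum of a set of reals: the least upper bound when it exists *)
Definition sup_R (E : R -> Prop) : R := epsilon (inhabits 0) (fun m => is_lub E m).

Definition tform (d : nat) (T : tensor3) (u v w : vec) : R :=
  rsum d (fun i => rsum d (fun j => rsum d (fun l => T i j l * u i * v j * w l))).
Definition tform_I (d : nat) (T : tensor3) (u v : vec) : vec :=
  fun l => rsum d (fun i => rsum d (fun j => T i j l * u i * v j)).

Definition tnorm (d : nat) (T : tensor3) : R :=
  sup_R (fun r => exists u v w, is_unit d u /\ is_unit d v /\ is_unit d w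
                           /\ r = Rabs (tform d T u v w)).

Definition colmat_norm (d k : nat) (a : nat -> vec) : R :=
  sup_R (fun r => exists x : vec, is_unit k x
                  /\ r = vnorm d (fun l => rsum k (fun i => x i * a i l))).

(* dist(u,v) = sup_{z ⊥ u} <z,v>/(|z| |v|); the value 0 is included in the set
   (nonnegativity convention, only relevant when no nonzero z ⊥ u exists, d = 1) *)
Definition vdist (d : nat) (u v : vec) : R :=
  sup_R (fun r => r = 0 \/ exists z : vec, vnorm d z <> 0 /\ dot d z u = 0
                  /\ r = dot d z v / (vnorm d z * vnorm d v)).

Definition cp_tensor (k : nat) (w : nat -> R) (a b c : nat -> vec) : tensor3 :=
  fun p q r => rsum k (fun i => w i * a i p * b i q * c i r).

(* Write [â = <â,a_j> a_j + e_a] and [b̂ = <b̂,b_j> b_j + e_b], where [|e_a|, |e_b| <= eps0].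
   Expanding T̂(â,b̂,I) along the rank-one decomposition gives [λ c_j + r] with
   [λ = w_j <â,a_j> <b̂,b_j>]. The residual [r] consists of the cross terms over [i <> j]
   (bounded by hypothesis (iii), and by incoherence together with the spectral bounds on
   A, B, C), of T(e_a,e_b,I) (at most ‖T‖ eps0²) and of Ψ(â,b̂,I) (at most ψ).
   As [|λ| >= w_j (1 - eps0²) >= w_min/2], every z ⊥ ĉ satisfies [λ <z,c_j> = - <z,r>],
   so dist(ĉ,c_j) <= 2|r|/w_min; and T̂(â,b̂,ĉ) = |λ c_j + r| is within [|r| + w_j eps0²]
   of w_j. *)

From Stdlib Require Import Reals Lra Lia Psatz ClassicalEpsilon.
Open Scope R_scope.

Lemma Rmax3_le x y z m : Rmax x (Rmax y z) <= m -> x <= m /\ y <= m /\ z <= m.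
Proof.
  intros H. pose proof (Rmax_l x (Rmax y z)); pose proof (Rmax_r x (Rmax y z)).
  pose proof (Rmax_l y z); pose proof (Rmax_r y z). lra.
Qed.

Lemma Rdiv_sqrt_nonneg x y : 0 <= x -> 0 <= x / sqrt y.
Proof.
  intros Hx. unfold Rdiv. destruct (Req_dec (sqrt y) 0) as [->|N]; [rewrite Rinv_0; lra|].
  pose proof (sqrt_pos y). apply Rmult_le_pos; [lra|apply Rlt_le, Rinv_0_lt_compat; lra].
Qed.

Lemma Rmult_le_of_le_div x y z e : 0 < z -> e <> 0 -> x <= y / (e * z) -> z * x <= y / e.
Proof.
  intros Hz He H. apply (Rmult_le_compat_l z) in H; [|lra].
  replace (z * (y / (e * z))) with (y / e) in H by (field; lra). exact H.
Qed.

Lemma Rsqr_le_of_le_sqrt e x : 0 <= e -> 0 <= x -> e <= sqrt x -> e * e <= x.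
Proof. intros He Hx H. rewrite <- (sqrt_sqrt x) by exact Hx. apply Rmult_le_compat; lra. Qed.

(** * Finite sums and the Euclidean norm *)

Lemma rsum_ext n f g : (forall i, (i < n)%nat -> f i = g i) -> rsum n f = rsum n g.
Proof.
  induction n as [|n IH]; intros H; simpl; [reflexivity|].
  rewrite IH, (H n); [reflexivity|lia|intros; apply H; lia].
Qed.

Lemma rsum_eq0 n f : (forall i, (i < n)%nat -> f i = 0) -> rsum n f = 0.
Proof.
  induction n as [|n IH]; intros H; simpl; [reflexivity|].
  rewrite IH, (H n); [ring|lia|intros; apply H; lia].
Qed.

Lemma rsum_add n f g : rsum n (fun i => f i + g i) = rsum n f + rsum n g.
Proof. induction n as [|n IH]; simpl; [ring|]. rewrite IH; ring. Qed.

Lemma rsum_scal_l n c f : rsum n (fun i => c * f i) = c * rsum n f.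
Proof. induction n as [|n IH]; simpl; [ring|]. rewrite IH; ring. Qed.

Lemma rsum_scal_r n c f : rsum n (fun i => f i * c) = rsum n f * c.
Proof. induction n as [|n IH]; simpl; [ring|]. rewrite IH; ring. Qed.

Lemma rsum_swap n m F :
  rsum n (fun i => rsum m (fun j => F i j)) = rsum m (fun j => rsum n (fun i => F i j)).
Proof.
  induction n as [|n IH]; simpl.
  - symmetry; apply rsum_eq0; reflexivity.
  - rewrite IH, rsum_add; reflexivity.
Qed.

Lemma rsum_le n f g : (forall i, (i < n)%nat -> f i <= g i) -> rsum n f <= rsum n g.
Proof.
  induction n as [|n IH]; intros H; simpl; [lra|].
  apply Rplus_le_compat; [apply IH; intros; apply H|apply H]; lia.
Qed.

Lemma rsum_nonneg n f : (forall i, (i < n)%nat -> 0 <= f i) -> 0 <= rsum n f.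
Proof.
  intros H. replace 0 with (rsum n (fun _ => 0)) by (apply rsum_eq0; reflexivity).
  apply rsum_le, H.
Qed.

Lemma Rabs_rsum_le n f : Rabs (rsum n f) <= rsum n (fun i => Rabs (f i)).
Proof.
  induction n as [|n IH]; simpl; [rewrite Rabs_R0; lra|].
  eapply Rle_trans; [apply Rabs_triang|lra].
Qed.

Lemma rsum_term_le n f i :
  (forall i, (i < n)%nat -> 0 <= f i) -> (i < n)%nat -> f i <= rsum n f.
Proof.
  induction n as [|n IH]; intros H Hi; [lia|]; simpl.
  assert (0 <= rsum n f) by (apply rsum_nonneg; intros; apply H; lia).
  destruct (Nat.eq_dec i n) as [->|Hin]; [lra|].
  assert (f i <= rsum n f) by (apply IH; [intros; apply H|]; lia).
  specialize (H n ltac:(lia)); lra.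
Qed.

Lemma rsum_kronecker n j x :
  (j < n)%nat -> rsum n (fun i => if Nat.eq_dec i j then x else 0) = x.
Proof.
  induction n as [|n IH]; intros Hj; [lia|]; simpl.
  destruct (Nat.eq_dec n j) as [->|Hnj].
  - rewrite rsum_eq0; [ring|]. intros i Hi. destruct (Nat.eq_dec i j); [lia|reflexivity].
  - rewrite IH by lia; ring.
Qed.

Lemma dot_comm d u v : dot d u v = dot d v u.
Proof. unfold dot; apply rsum_ext; intros; ring. Qed.

Lemma dot_self_nonneg d u : 0 <= dot d u u.
Proof. apply rsum_nonneg; intros; nra. Qed.

Lemma vnorm_nonneg d u : 0 <= vnorm d u.
Proof. apply sqrt_pos. Qed.

Lemma vnorm_sqr d u : vnorm d u * vnorm d u = dot d u u.
Proof. apply sqrt_sqrt, dot_self_nonneg. Qed.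

Lemma dot_unit d u : is_unit d u -> dot d u u = 1.
Proof. intros Hu; rewrite <- vnorm_sqr, Hu; ring. Qed.

Lemma vnorm_ext d u v : (forall i, (i < d)%nat -> u i = v i) -> vnorm d u = vnorm d v.
Proof. intros H; unfold vnorm, dot; f_equal; apply rsum_ext; intros; rewrite H; auto. Qed.

Lemma vnorm_le_of_sqr d u x : 0 <= x -> dot d u u <= x * x -> vnorm d u <= x.
Proof. intros. pose proof (vnorm_sqr d u); pose proof (vnorm_nonneg d u); nra. Qed.

Lemma Rabs_coord_le_vnorm d u i : (i < d)%nat -> Rabs (u i) <= vnorm d u.
Proof.
  intros Hi. rewrite <- sqrt_Rsqr_abs. apply sqrt_le_1_alt.
  apply (rsum_term_le d (fun i => u i * u i)); auto. intros; nra.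
Qed.

Lemma vnorm_eq0_coord d u i : vnorm d u = 0 -> (i < d)%nat -> u i = 0.
Proof.
  intros H Hi. pose proof (Rabs_coord_le_vnorm d u i Hi).
  destruct (Req_dec (u i) 0) as [E|E]; [exact E|].
  pose proof (Rabs_pos_lt _ E); lra.
Qed.

Lemma dot_sqr_le d u v : dot d u v * dot d u v <= dot d u u * dot d v v.
Proof.
  unfold dot; induction d as [|d IH]; simpl; [lra|].
  set (A := rsum d (fun i => u i * v i)) in *.
  set (P := rsum d (fun i => u i * u i)) in *.
  set (Q := rsum d (fun i => v i * v i)) in *.
  assert (HP : 0 <= P) by (apply rsum_nonneg; intros; nra).
  assert (HQ : 0 <= Q) by (apply rsum_nonneg; intros; nra).
  set (x := u d); set (y := v d); clearbody A P Q x y.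
  (* From [(P y - A x)^2 >= 0] and [A^2 <= P Q], after dividing by [P]. *)
  assert (2 * A * x * y <= P * y * y + Q * x * x).
  { destruct (Req_dec P 0) as [HP0|HP0].
    - assert (A = 0) as -> by nra. subst P; nra.
    - assert (0 <= (P * y - A * x) * (P * y - A * x)) by apply Rle_0_sqr.
      assert (A * A * (x * x) <= P * Q * (x * x)) by (apply Rmult_le_compat_r; nra).
      nra. }
  nra.
Qed.

Lemma Rabs_dot_le d u v : Rabs (dot d u v) <= vnorm d u * vnorm d v.
Proof.
  pose proof (dot_sqr_le d u v) as H. rewrite <- !vnorm_sqr in H.
  pose proof (vnorm_nonneg d u); pose proof (vnorm_nonneg d v).
  rewrite <- (Rabs_pos_eq (vnorm d u * vnorm d v)) by nra.
  apply Rsqr_le_abs_0; unfold Rsqr; nra.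
Qed.

Lemma dot_le d u v : dot d u v <= vnorm d u * vnorm d v.
Proof. pose proof (Rabs_dot_le d u v); pose proof (Rle_abs (dot d u v)); lra. Qed.

Lemma vnorm_add_le d u v : vnorm d (fun l => u l + v l) <= vnorm d u + vnorm d v.
Proof.
  pose proof (vnorm_nonneg d u); pose proof (vnorm_nonneg d v).
  apply vnorm_le_of_sqr; [lra|].
  replace (dot d (fun l => u l + v l) (fun l => u l + v l))
    with (dot d u u + 2 * dot d u v + dot d v v)
    by (unfold dot; rewrite <- rsum_scal_l, <- !rsum_add; apply rsum_ext; intros; ring).
  pose proof (dot_le d u v). rewrite <- !vnorm_sqr. nra.
Qed.

Lemma vnorm_scal d c u : vnorm d (fun l => c * u l) = Rabs c * vnorm d u.
Proof.
  unfold vnorm. rewrite <- (sqrt_Rsqr (Rabs c)) by apply Rabs_pos.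
  rewrite <- sqrt_mult_alt by apply Rle_0_sqr. f_equal.
  unfold dot; rewrite <- rsum_scal_l; apply rsum_ext; intros.
  rewrite <- Rsqr_abs; unfold Rsqr; ring.
Qed.

Lemma vnorm_rsum_le d k F :
  vnorm d (fun l => rsum k (fun i => F i l)) <= rsum k (fun i => vnorm d (F i)).
Proof.
  induction k as [|k IH]; simpl.
  - rewrite (vnorm_ext d _ (fun l => 0 * 0)) by (intros; ring).
    rewrite vnorm_scal, Rabs_R0; lra.
  - eapply Rle_trans; [apply vnorm_add_le|lra].
Qed.

Lemma vnorm_le_pointwise n f g c : 0 <= c ->
  (forall i, (i < n)%nat -> Rabs (f i) <= c * Rabs (g i)) -> vnorm n f <= c * vnorm n g.
Proof.
  intros Hc H. pose proof (vnorm_nonneg n g).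
  apply vnorm_le_of_sqr; [nra|].
  replace (c * vnorm n g * (c * vnorm n g)) with (c * c * (vnorm n g * vnorm n g)) by ring.
  rewrite vnorm_sqr; unfold dot; rewrite <- rsum_scal_l.
  apply rsum_le; intros i Hi. specialize (H i Hi).
  assert (Hsq : Rabs (f i) * Rabs (f i) <= c * Rabs (g i) * (c * Rabs (g i)))
    by (apply Rmult_le_compat; auto using Rabs_pos).
  assert (Habs : forall x, Rabs x * Rabs x = x * x)
    by (intros; rewrite <- Rabs_mult; apply Rabs_pos_eq; nra).
  rewrite Habs in Hsq. pose proof (Habs (g i)). nra.
Qed.

Lemma normalize_unit d u : vnorm d u <> 0 -> is_unit d (fun l => / vnorm d u * u l).
Proof.
  intros H. unfold is_unit. pose proof (vnorm_nonneg d u).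
  rewrite vnorm_scal, Rabs_pos_eq by (apply Rlt_le, Rinv_0_lt_compat; lra).
  field; exact H.
Qed.

(** * Suprema, trilinear forms and the tensor norm *)

Lemma sup_R_lub E : (exists x, E x) -> (exists M, forall x, E x -> x <= M) -> is_lub E (sup_R E).
Proof.
  intros Hne [M HM]. unfold sup_R. apply epsilon_spec.
  destruct (completeness E) as [m Hm]; [exists M; exact HM|exact Hne|exists m; exact Hm].
Qed.

Lemma sup_R_ge E x : (exists M, forall x, E x -> x <= M) -> E x -> x <= sup_R E.
Proof. intros HM Hx. apply (sup_R_lub E); eauto. Qed.

Lemma sup_R_le E B : (exists x, E x) -> (forall x, E x -> x <= B) -> sup_R E <= B.
Proof. intros Hne HB. apply (sup_R_lub E); eauto. Qed.

Definition has_unit (d : nat) : Prop := exists u, is_unit d u.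

Lemma tform_scal d T u v w x y z :
  tform d T (fun l => x * u l) (fun l => y * v l) (fun l => z * w l)
  = x * y * z * tform d T u v w.
Proof.
  unfold tform. rewrite <- rsum_scal_l. apply rsum_ext; intros.
  rewrite <- rsum_scal_l. apply rsum_ext; intros.
  rewrite <- rsum_scal_l. apply rsum_ext; intros. ring.
Qed.

Lemma tform_eq0 d T u v w :
  vnorm d u = 0 \/ vnorm d v = 0 \/ vnorm d w = 0 -> tform d T u v w = 0.
Proof.
  intros H. unfold tform. apply rsum_eq0; intros p Hp.
  apply rsum_eq0; intros q Hq. apply rsum_eq0; intros r Hr.
  destruct H as [H|[H|H]]; rewrite ?(vnorm_eq0_coord d u p), ?(vnorm_eq0_coord d v q),
    ?(vnorm_eq0_coord d w r) by assumption; ring.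
Qed.

Lemma Rabs_tform_le_tnorm d T u v w :
  is_unit d u -> is_unit d v -> is_unit d w -> Rabs (tform d T u v w) <= tnorm d T.
Proof.
  intros Hu Hv Hw. apply sup_R_ge; [|exists u, v, w; auto].
  exists (rsum d (fun p => rsum d (fun q => rsum d (fun r => Rabs (T p q r))))).
  intros x (u' & v' & w' & Hu' & Hv' & Hw' & ->). unfold tform.
  eapply Rle_trans; [apply Rabs_rsum_le|]. apply rsum_le; intros p Hp.
  eapply Rle_trans; [apply Rabs_rsum_le|]. apply rsum_le; intros q Hq.
  eapply Rle_trans; [apply Rabs_rsum_le|]. apply rsum_le; intros r Hr.
  pose proof (Rabs_coord_le_vnorm d u' p Hp) as Hp'; pose proof (Rabs_coord_le_vnorm d v' q Hq) as Hq'.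
  pose proof (Rabs_coord_le_vnorm d w' r Hr) as Hr'. unfold is_unit in *.
  rewrite Hu' in Hp'; rewrite Hv' in Hq'; rewrite Hw' in Hr'.
  rewrite !Rabs_mult. set (t := Rabs (T p q r)).
  assert (0 <= t) by apply Rabs_pos.
  apply Rle_trans with (t * 1 * 1 * 1); [|lra].
  repeat apply Rmult_le_compat; auto using Rabs_pos, Rmult_le_pos; lra.
Qed.

Lemma tnorm_nonneg d T : has_unit d -> 0 <= tnorm d T.
Proof.
  intros [u Hu]. eapply Rle_trans; [apply Rabs_pos|apply (Rabs_tform_le_tnorm d T u u u); auto].
Qed.

Lemma Rabs_tform_le d T u v w : has_unit d ->
  Rabs (tform d T u v w) <= tnorm d T * vnorm d u * vnorm d v * vnorm d w.
Proof.
  intros HU. pose proof (tnorm_nonneg d T HU).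
  pose proof (vnorm_nonneg d u); pose proof (vnorm_nonneg d v); pose proof (vnorm_nonneg d w).
  destruct (Req_dec (vnorm d u) 0) as [Z|Nu];
    [rewrite tform_eq0, Rabs_R0 by auto; nra|].
  destruct (Req_dec (vnorm d v) 0) as [Z|Nv];
    [rewrite tform_eq0, Rabs_R0 by auto; nra|].
  destruct (Req_dec (vnorm d w) 0) as [Z|Nw];
    [rewrite tform_eq0, Rabs_R0 by auto; nra|].
  pose proof (Rabs_tform_le_tnorm d T _ _ _
    (normalize_unit d u Nu) (normalize_unit d v Nv) (normalize_unit d w Nw)) as H'.
  rewrite tform_scal, Rabs_mult, !Rabs_pos_eq in H'
    by (repeat apply Rmult_le_pos; apply Rlt_le, Rinv_0_lt_compat; lra).
  set (N := vnorm d u * vnorm d v * vnorm d w) in *.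
  assert (0 < N) by (unfold N; repeat apply Rmult_lt_0_compat; lra).
  replace (/ vnorm d u * / vnorm d v * / vnorm d w) with (/ N) in H' by (unfold N; field; lra).
  replace (tnorm d T * vnorm d u * vnorm d v * vnorm d w) with (N * tnorm d T) by (unfold N; ring).
  apply (Rmult_le_compat_l N) in H'; [|lra].
  rewrite <- Rmult_assoc, Rinv_r, Rmult_1_l in H' by lra. exact H'.
Qed.

Lemma dot_tform_I d T x y g : dot d (tform_I d T x y) g = tform d T x y g.
Proof.
  unfold dot, tform_I, tform.
  rewrite (rsum_ext _ _ (fun l => rsum d (fun p => rsum d (fun q => T p q l * x p * y q * g l)))).
  - rewrite rsum_swap. apply rsum_ext; intros. apply rsum_swap.
  - intros l _. rewrite <- rsum_scal_r. apply rsum_ext; intros. symmetry; apply rsum_scal_r.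
Qed.

Lemma tform_I_add d T P x y l :
  tform_I d (fun p q r => T p q r + P p q r) x y l = tform_I d T x y l + tform_I d P x y l.
Proof.
  unfold tform_I. rewrite <- rsum_add. apply rsum_ext; intros.
  rewrite <- rsum_add. apply rsum_ext; intros; ring.
Qed.

Lemma vnorm_tform_I_le d T x y : has_unit d ->
  vnorm d (tform_I d T x y) <= tnorm d T * vnorm d x * vnorm d y.
Proof.
  intros HU. set (g := tform_I d T x y).
  pose proof (Rabs_tform_le d T x y g HU) as H. rewrite <- dot_tform_I, <- vnorm_sqr in H.
  pose proof (vnorm_nonneg d g); pose proof (tnorm_nonneg d T HU).
  pose proof (vnorm_nonneg d x); pose proof (vnorm_nonneg d y).
  rewrite Rabs_pos_eq in H by nra.
  destruct (Req_dec (vnorm d g) 0) as [->|N]; [repeat apply Rmult_le_pos; auto|].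
  apply (Rmult_le_reg_r (vnorm d g)); [lra|]. nra.
Qed.

(* Also valid for [v = 0], where [v / |v|] is [0] since [/ 0 = 0]. *)
Lemma tform_normalize d T x y :
  let v := tform_I d T x y in tform d T x y (fun l => v l / vnorm d v) = vnorm d v.
Proof.
  intros v. rewrite <- dot_tform_I. fold v.
  replace (dot d v (fun l => v l / vnorm d v)) with (dot d v v * / vnorm d v)
    by (unfold dot; rewrite <- rsum_scal_r; apply rsum_ext; intros; unfold Rdiv; ring).
  rewrite <- vnorm_sqr. destruct (Req_dec (vnorm d v) 0) as [->|N]; [ring|field; exact N].
Qed.

(** * Matrix norm, distance and weights *)

Section ColumnMatrix.
Variables (d k : nat) (a : nat -> vec).
Hypothesis k_pos : (0 < k)%nat.
Hypothesis a_unit : forall i, (i < k)%nat -> is_unit d (a i).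

Let colmat_set := fun r => exists x : vec, is_unit k x
  /\ r = vnorm d (fun l => rsum k (fun i => x i * a i l)).

Lemma colmat_set_bounded : exists M, forall r, colmat_set r -> r <= M.
Proof.
  exists (rsum k (fun _ => 1)). intros r (x & Hx & ->).
  eapply Rle_trans; [apply (vnorm_rsum_le d k (fun i l => x i * a i l))|].
  apply rsum_le; intros i Hi. rewrite vnorm_scal, (a_unit i Hi).
  pose proof (Rabs_coord_le_vnorm k x i Hi). unfold is_unit in Hx. lra.
Qed.

Lemma colmat_norm_nonneg : 0 <= colmat_norm d k a.
Proof.
  set (e0 := fun i : nat => if Nat.eq_dec i 0 then 1 else 0).
  assert (He0 : is_unit k e0).
  { unfold is_unit, vnorm. rewrite <- sqrt_1. f_equal. unfold dot.
    rewrite <- (rsum_kronecker k 0 1) by exact k_pos.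
    apply rsum_ext; intros i _. unfold e0. destruct (Nat.eq_dec i 0); ring. }
  eapply Rle_trans; [apply (vnorm_nonneg d (fun l => rsum k (fun i => e0 i * a i l)))|].
  apply sup_R_ge; [exact colmat_set_bounded|exists e0; auto].
Qed.

Lemma vnorm_comb_le x :
  vnorm d (fun l => rsum k (fun i => x i * a i l)) <= colmat_norm d k a * vnorm k x.
Proof.
  destruct (Req_dec (vnorm k x) 0) as [Z|N].
  - rewrite Z, Rmult_0_r, (vnorm_ext d _ (fun l => 0 * 0)), vnorm_scal, Rabs_R0; [lra|].
    intros l _. rewrite Rmult_0_r. apply rsum_eq0; intros i Hi.
    rewrite (vnorm_eq0_coord k x i Z Hi); ring.
  - pose proof (vnorm_nonneg k x).
    assert (Hx : colmat_set (vnorm d (fun l => rsum k (fun i => (/ vnorm k x * x i) * a i l))))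
      by (exists (fun i => / vnorm k x * x i); split; [apply normalize_unit|]; auto).
    apply (sup_R_ge _ _ colmat_set_bounded) in Hx.
    rewrite (vnorm_ext d _ (fun l => / vnorm k x * rsum k (fun i => x i * a i l))) in Hx
      by (intros; rewrite <- rsum_scal_l; apply rsum_ext; intros; ring).
    rewrite vnorm_scal, Rabs_pos_eq in Hx by (apply Rlt_le, Rinv_0_lt_compat; lra).
    apply (Rmult_le_compat_l (vnorm k x)) in Hx; [|lra].
    rewrite <- Rmult_assoc, Rinv_r, Rmult_1_l in Hx by lra.
    change (colmat_norm d k a) with (sup_R colmat_set); lra.
Qed.

(* From [|A^T u|^2 = <A A^T u, u>] and Cauchy-Schwarz. *)
Lemma vnorm_gram_le u :
  vnorm k (fun i => dot d (a i) u) <= colmat_norm d k a * vnorm d u.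
Proof.
  set (y := fun i => dot d (a i) u).
  assert (Hyy : dot k y y = dot d (fun l => rsum k (fun i => y i * a i l)) u).
  { unfold dot at 1. unfold y at 2. unfold dot.
    rewrite (rsum_ext _ _ (fun i => rsum d (fun l => y i * a i l * u l))).
    - rewrite rsum_swap. apply rsum_ext; intros. rewrite <- rsum_scal_r; reflexivity.
    - intros. rewrite <- rsum_scal_l. apply rsum_ext; intros; ring. }
  pose proof (dot_le d (fun l => rsum k (fun i => y i * a i l)) u) as H.
  rewrite <- Hyy, <- vnorm_sqr in H.
  pose proof (vnorm_comb_le y). pose proof colmat_norm_nonneg.
  pose proof (vnorm_nonneg k y); pose proof (vnorm_nonneg d u).
  destruct (Req_dec (vnorm k y) 0) as [->|N]; [apply Rmult_le_pos; auto|].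
  apply (Rmult_le_reg_r (vnorm k y)); [lra|]. nra.
Qed.

End ColumnMatrix.

Section Distance.
Variables (d : nat) (u v : vec).

Let dist_set := fun r => r = 0 \/ exists z : vec, vnorm d z <> 0 /\ dot d z u = 0
  /\ r = dot d z v / (vnorm d z * vnorm d v).

Lemma dist_set_bounded : exists M, forall r, dist_set r -> r <= M.
Proof.
  exists 1. intros r [->|(z & Hz & _ & ->)]; [lra|].
  pose proof (vnorm_nonneg d z); pose proof (vnorm_nonneg d v).
  destruct (Req_dec (vnorm d v) 0) as [->|N].
  - rewrite Rmult_0_r; unfold Rdiv; rewrite Rinv_0; lra.
  - pose proof (dot_le d z v). apply (Rmult_le_reg_r (vnorm d z * vnorm d v)); [nra|].
    unfold Rdiv; rewrite Rmult_assoc, Rinv_l; nra.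
Qed.

Lemma vdist_nonneg : 0 <= vdist d u v.
Proof. apply (sup_R_ge dist_set); [exact dist_set_bounded|left; reflexivity]. Qed.

Lemma vdist_ge z : vnorm d z <> 0 -> dot d z u = 0 ->
  dot d z v / (vnorm d z * vnorm d v) <= vdist d u v.
Proof. intros. apply (sup_R_ge dist_set); [exact dist_set_bounded|right; eauto]. Qed.

Lemma vdist_le B : 0 <= B ->
  (forall z, vnorm d z <> 0 -> dot d z u = 0 -> dot d z v / (vnorm d z * vnorm d v) <= B) ->
  vdist d u v <= B.
Proof.
  intros HB H. apply (sup_R_le dist_set); [exists 0; left; reflexivity|].
  intros r [->|(z & Hz & Hzu & ->)]; auto.
Qed.

End Distance.

Definition orth (d : nat) (x y : vec) : vec := fun p => x p - dot d x y * y p.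

Lemma dot_orth_r d u x y : dot d u (orth d x y) = dot d u x - dot d x y * dot d u y.
Proof.
  unfold orth. generalize (dot d x y); intros s. unfold dot.
  transitivity (rsum d (fun i => u i * x i + - s * (u i * y i))); [apply rsum_ext; intros; ring|].
  rewrite rsum_add, rsum_scal_l; ring.
Qed.

Lemma dot_orth d x y : is_unit d y -> dot d y (orth d x y) = 0.
Proof. intros Hy. rewrite dot_orth_r, dot_unit, (dot_comm d y x) by exact Hy; ring. Qed.

Lemma vnorm_orth_sqr d x y : is_unit d x -> is_unit d y ->
  vnorm d (orth d x y) * vnorm d (orth d x y) = 1 - dot d x y * dot d x y.
Proof.
  intros Hx Hy. rewrite vnorm_sqr, dot_orth_r, (dot_comm d (orth d x y) y), dot_orth,
    (dot_comm d (orth d x y) x), dot_orth_r, dot_unit by assumption; ring.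
Qed.

(* The witness is [z := orth y x], orthogonal to [x] with [<z,y> = |z|^2 = |orth x y|^2]. *)
Lemma vnorm_orth_le_vdist d x y : is_unit d x -> is_unit d y ->
  vnorm d (orth d x y) <= vdist d x y.
Proof.
  intros Hx Hy. set (e := orth d x y). set (z := orth d y x).
  pose proof (vnorm_orth_sqr d x y Hx Hy) as He. fold e in He.
  pose proof (vnorm_orth_sqr d y x Hy Hx) as Hz. fold z in Hz. rewrite dot_comm in Hz.
  assert (Hzy : dot d z y = 1 - dot d x y * dot d x y).
  { unfold z. rewrite dot_comm, dot_orth_r, dot_unit, (dot_comm d y x) by exact Hy; ring. }
  assert (Hzx : dot d z x = 0) by (rewrite dot_comm; apply dot_orth, Hx).
  pose proof (vnorm_nonneg d e); pose proof (vnorm_nonneg d z).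
  destruct (Req_dec (vnorm d e) 0) as [->|N]; [apply vdist_nonneg|].
  assert (Hze : vnorm d z = vnorm d e) by nra.
  eapply Rle_trans; [|apply (vdist_ge d x y z); [lra|exact Hzx]].
  rewrite Hzy, Hy, Hze, <- He. right; field; exact N.
Qed.

Lemma rmax_upto_ge n f i : (i <= n)%nat -> f i <= rmax_upto n f.
Proof.
  induction n as [|n IH]; intros H; simpl; [replace i with O by lia; lra|].
  destruct (Nat.eq_dec i (S n)) as [->|N]; [apply Rmax_r|].
  eapply Rle_trans; [apply IH; lia|apply Rmax_l].
Qed.

Lemma rmin_upto_le n f i : (i <= n)%nat -> rmin_upto n f <= f i.
Proof.
  induction n as [|n IH]; intros H; simpl; [replace i with O by lia; lra|].
  destruct (Nat.eq_dec i (S n)) as [->|N]; [apply Rmin_r|].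
  eapply Rle_trans; [apply Rmin_l|apply IH; lia].
Qed.

Lemma rmin_upto_pos n f : (forall i, (i <= n)%nat -> 0 < f i) -> 0 < rmin_upto n f.
Proof.
  induction n as [|n IH]; intros H; simpl; [apply H; lia|].
  apply Rmin_glb_lt; [apply IH; intros; apply H|apply H]; lia.
Qed.

Lemma rmax_lt_ge k f i : (i < k)%nat -> f i <= rmax_lt k f.
Proof. intros; apply rmax_upto_ge; lia. Qed.

Lemma rmin_lt_le k f i : (i < k)%nat -> rmin_lt k f <= f i.
Proof. intros; apply rmin_upto_le; lia. Qed.

Lemma rmin_lt_pos k f : (0 < k)%nat -> (forall i, (i < k)%nat -> 0 < f i) -> 0 < rmin_lt k f.
Proof. intros Hk H; apply rmin_upto_pos; intros; apply H; lia. Qed.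

(** * Perturbation of a normalized vector *)

Section Perturbation.
Variables (d : nat) (v c r : vec) (lam : R).
Hypothesis c_unit : is_unit d c.
Hypothesis v_decomp : forall l, v l = lam * c l + r l.

Lemma dot_decomp z : dot d z v = lam * dot d z c + dot d z r.
Proof.
  unfold dot. rewrite <- rsum_scal_l, <- rsum_add.
  apply rsum_ext; intros; rewrite v_decomp; ring.
Qed.

Lemma vdist_normalize_le B mu : 0 < mu -> mu <= Rabs lam -> vnorm d r <= B ->
  vdist d (fun l => v l / vnorm d v) c <= B / mu.
Proof.
  intros Hmu Hlam HrB. pose proof (vnorm_nonneg d r).
  apply vdist_le; [apply Rmult_le_pos; [lra|apply Rlt_le, Rinv_0_lt_compat; lra]|].
  intros z Hz Hzc. rewrite c_unit, Rmult_1_r.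
  assert (Hzv : dot d z v = 0).
  { destruct (Req_dec (vnorm d v) 0) as [Z|N].
    - apply rsum_eq0; intros i Hi. rewrite (vnorm_eq0_coord d v i Z Hi); ring.
    - replace (dot d z (fun l => v l / vnorm d v)) with (dot d z v / vnorm d v) in Hzc
        by (unfold dot, Rdiv; rewrite <- rsum_scal_r; apply rsum_ext; intros; ring).
      apply (Rmult_eq_compat_r (vnorm d v)) in Hzc.
      unfold Rdiv in Hzc; rewrite Rmult_assoc, Rinv_l, Rmult_1_r, Rmult_0_l in Hzc; auto. }
  rewrite dot_decomp in Hzv.
  pose proof (vnorm_nonneg d z).
  assert (Hzc' : Rabs lam * Rabs (dot d z c) <= vnorm d z * B).
  { rewrite <- Rabs_mult. replace (lam * dot d z c) with (- dot d z r) by lra.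
    rewrite Rabs_Ropp. eapply Rle_trans; [apply Rabs_dot_le|]. apply Rmult_le_compat_l; lra. }
  pose proof (Rle_abs (dot d z c)); pose proof (Rabs_pos (dot d z c)).
  apply (Rmult_le_reg_r (vnorm d z * mu)); [nra|].
  unfold Rdiv. replace (dot d z c * / vnorm d z * (vnorm d z * mu))
    with (mu * dot d z c) by (field; lra).
  replace (B * / mu * (vnorm d z * mu)) with (vnorm d z * B) by (field; lra).
  nra.
Qed.

Lemma Rabs_vnorm_sub_le : Rabs (vnorm d v - Rabs lam) <= vnorm d r.
Proof.
  assert (Hlc : vnorm d (fun l => lam * c l) = Rabs lam) by (rewrite vnorm_scal, c_unit; ring).
  assert (vnorm d v <= Rabs lam + vnorm d r).
  { rewrite (vnorm_ext d v (fun l => lam * c l + r l)) by (intros; apply v_decomp).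
    rewrite <- Hlc. apply vnorm_add_le. }
  assert (Rabs lam <= vnorm d v + vnorm d r).
  { rewrite <- Hlc, (vnorm_ext d _ (fun l => v l + -1 * r l)) by (intros; rewrite v_decomp; ring).
    eapply Rle_trans; [apply vnorm_add_le|].
    rewrite vnorm_scal, Rabs_left by lra. lra. }
  apply Rabs_le; lra.
Qed.

End Perturbation.

Lemma Rabs_dot_unit_le d x y : is_unit d x -> is_unit d y -> Rabs (dot d x y) <= 1.
Proof. intros Hx Hy. pose proof (Rabs_dot_le d x y) as H. rewrite Hx, Hy in H. lra. Qed.

Lemma Rabs_dot_mult_dot_ge d x x' y y' e :
  is_unit d x -> is_unit d x' -> is_unit d y -> is_unit d y' ->
  vnorm d (orth d x x') <= e -> vnorm d (orth d y y') <= e -> e * e <= 1 ->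
  1 - e * e <= Rabs (dot d x x' * dot d y y').
Proof.
  intros Hx Hx' Hy Hy' Hex Hey He.
  pose proof (vnorm_orth_sqr d x x' Hx Hx'); pose proof (vnorm_orth_sqr d y y' Hy Hy').
  pose proof (vnorm_nonneg d (orth d x x')); pose proof (vnorm_nonneg d (orth d y y')).
  set (s := dot d x x') in *; set (t := dot d y y') in *.
  assert (1 - e * e <= s * s) by nra. assert (1 - e * e <= t * t) by nra.
  assert (Hst : Rabs (s * t) * Rabs (s * t) = s * s * (t * t))
    by (rewrite <- Rabs_mult, Rabs_pos_eq; [ring|nra]).
  pose proof (Rabs_pos (s * t)).
  assert ((1 - e * e) * (1 - e * e) <= Rabs (s * t) * Rabs (s * t))
    by (rewrite Hst; apply Rmult_le_compat; lra).
  nra.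
Qed.

(** * The perturbed CP tensor *)

Definition offdiag_comb (k j : nat) (w : nat -> R) (c : nat -> vec) (f g : nat -> R) : vec :=
  fun l => rsum k (fun i => if Nat.eq_dec i j then 0 else w i * f i * g i * c i l).

Lemma vnorm_offdiag_comb_le d k j w c f g delta :
  (0 < k)%nat -> (forall i, (i < k)%nat -> is_unit d (c i)) -> 0 <= delta ->
  (forall i, (i < k)%nat -> i <> j -> Rabs (w i * f i) <= delta) ->
  vnorm d (offdiag_comb k j w c f g) <= colmat_norm d k c * (delta * vnorm k g).
Proof.
  intros Hk Hc Hdelta Hf. set (z := fun i => if Nat.eq_dec i j then 0 else w i * f i * g i).
  rewrite (vnorm_ext d _ (fun l => rsum k (fun i => z i * c i l))).
  - eapply Rle_trans; [apply vnorm_comb_le; auto|].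
    apply Rmult_le_compat_l; [apply colmat_norm_nonneg; auto|].
    apply vnorm_le_pointwise; [exact Hdelta|]. intros i Hi. unfold z.
    destruct (Nat.eq_dec i j) as [->|N].
    + rewrite Rabs_R0. apply Rmult_le_pos; [exact Hdelta|apply Rabs_pos].
    + rewrite Rabs_mult. apply Rmult_le_compat_r; [apply Rabs_pos|auto].
  - intros l _. apply rsum_ext; intros i _. unfold z. destruct (Nat.eq_dec i j); ring.
Qed.

Lemma tform_I_cp d k w a b c x y l : tform_I d (cp_tensor k w a b c) x y l
  = rsum k (fun i => w i * dot d (a i) x * dot d (b i) y * c i l).
Proof.
  unfold tform_I, cp_tensor.
  rewrite (rsum_ext _ _ (fun p => rsum k (fun i =>
    rsum d (fun q => w i * a i p * b i q * c i l * x p * y q)))).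
  - rewrite rsum_swap. apply rsum_ext; intros i _. unfold dot.
    set (B := rsum d (fun q => b i q * y q)).
    replace (w i * rsum d (fun p => a i p * x p) * B * c i l)
      with (rsum d (fun p => a i p * x p) * (B * (w i * c i l))) by ring.
    rewrite <- rsum_scal_r. apply rsum_ext; intros p _. unfold B.
    rewrite <- rsum_scal_r, <- rsum_scal_l. apply rsum_ext; intros; ring.
  - intros p _. rewrite <- rsum_swap. apply rsum_ext; intros q _.
    rewrite <- !rsum_scal_r. reflexivity.
Qed.

(* Expanding [x = <x,a_j> a_j + orth x a_j] and [y = <y,b_j> b_j + orth y b_j] in the rank-one
   sum: the diagonal term [i = j] only survives in the leading part. *)
Lemma tform_I_cp_orth_split d k w a b c j x y l :
  (j < k)%nat -> is_unit d (a j) -> is_unit d (b j) ->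
  tform_I d (cp_tensor k w a b c) x y l =
    w j * dot d x (a j) * dot d y (b j) * c j l
    + dot d x (a j) * dot d y (b j) *
        offdiag_comb k j w c (fun i => dot d (a i) (a j)) (fun i => dot d (b i) (b j)) l
    + dot d x (a j) *
        offdiag_comb k j w c (fun i => dot d (a i) (a j)) (fun i => dot d (b i) (orth d y (b j))) l
    + dot d y (b j) *
        offdiag_comb k j w c (fun i => dot d (b i) (b j)) (fun i => dot d (a i) (orth d x (a j))) l
    + tform_I d (cp_tensor k w a b c) (orth d x (a j)) (orth d y (b j)) l.
Proof.
  intros Hj Haj Hbj. rewrite !tform_I_cp. unfold offdiag_comb.
  rewrite <- (rsum_kronecker k j (w j * dot d x (a j) * dot d y (b j) * c j l)) by exact Hj.
  rewrite <- !rsum_scal_l, <- !rsum_add. apply rsum_ext; intros i Hi.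
  rewrite !dot_orth_r.
  destruct (Nat.eq_dec i j) as [->|N].
  - rewrite !dot_unit, (dot_comm d (a j) x), (dot_comm d (b j) y) by assumption; ring.
  - ring.
Qed.

Section PerturbedCPTensor.
Variables (d k : nat) (w : nat -> R) (a b c : nat -> vec) (j : nat).
Variables (delta M eps : R) (x y : vec).
Hypothesis j_lt_k : (j < k)%nat.
Hypothesis w_pos : forall i, (i < k)%nat -> 0 < w i.
Hypothesis factors_unit :
  forall i, (i < k)%nat -> is_unit d (a i) /\ is_unit d (b i) /\ is_unit d (c i).
Hypothesis delta_nonneg : 0 <= delta.
Hypothesis incoherent : forall i, (i < k)%nat -> i <> j ->
  Rabs (dot d (a i) (a j)) <= delta /\ Rabs (dot d (b i) (b j)) <= delta.
Hypothesis colmat_a_le : colmat_norm d k a <= M.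
Hypothesis colmat_b_le : colmat_norm d k b <= M.
Hypothesis colmat_c_le : colmat_norm d k c <= M.
Hypothesis x_unit : is_unit d x.
Hypothesis y_unit : is_unit d y.
Hypothesis orth_x_le : vnorm d (orth d x (a j)) <= eps.
Hypothesis orth_y_le : vnorm d (orth d y (b j)) <= eps.

Let T := cp_tensor k w a b c.
Let wmax := rmax_lt k w.

Lemma vnorm_offdiag_cross_le (f g : nat -> vec) (e : vec) :
  (forall i, (i < k)%nat -> is_unit d (g i)) -> colmat_norm d k g <= M ->
  (forall i, (i < k)%nat -> i <> j -> Rabs (dot d (f i) (f j)) <= delta) ->
  vnorm d e <= eps ->
  vnorm d (offdiag_comb k j w c (fun i => dot d (f i) (f j)) (fun i => dot d (g i) e))
    <= M * (wmax * delta) * (M * eps).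
Proof.
  intros Hg HgM Hf He.
  assert (Hk : (0 < k)%nat) by lia.
  assert (Hc : forall i, (i < k)%nat -> is_unit d (c i)) by (intros; apply factors_unit; auto).
  pose proof (colmat_norm_nonneg d k c Hk Hc).
  pose proof (w_pos j j_lt_k); pose proof (rmax_lt_ge k w j j_lt_k).
  assert (0 <= wmax * delta) by (apply Rmult_le_pos; unfold wmax; lra).
  eapply Rle_trans; [apply (vnorm_offdiag_comb_le d k j w c _ _ (wmax * delta)); auto|].
  - intros i Hi Hij. rewrite Rabs_mult, (Rabs_pos_eq (w i)) by (apply Rlt_le, w_pos; auto).
    apply Rmult_le_compat; [apply Rlt_le, w_pos|apply Rabs_pos|apply rmax_lt_ge|apply Hf]; auto.
  - pose proof (vnorm_gram_le d k g Hk Hg e). pose proof (vnorm_nonneg k (fun i => dot d (g i) e)).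
    pose proof (colmat_norm_nonneg d k g Hk Hg). pose proof (vnorm_nonneg d e).
    rewrite (Rmult_assoc M). apply Rmult_le_compat; [lra|apply Rmult_le_pos; lra|lra|].
    apply Rmult_le_compat_l; [lra|]. eapply Rle_trans; [eassumption|].
    apply Rmult_le_compat; lra.
Qed.

Lemma vnorm_cp_residual_le :
  vnorm d (fun l => tform_I d T x y l - w j * dot d x (a j) * dot d y (b j) * c j l)
  <= vnorm d (offdiag_comb k j w c (fun i => dot d (a i) (a j)) (fun i => dot d (b i) (b j)))
     + 2 * (M * (wmax * delta) * (M * eps)) + tnorm d T * eps * eps.
Proof.
  destruct (factors_unit j j_lt_k) as (Haj & Hbj & _).
  set (sa := dot d x (a j)); set (sb := dot d y (b j)).
  set (P1 := offdiag_comb k j w c (fun i => dot d (a i) (a j)) (fun i => dot d (b i) (b j))).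
  set (P2 := offdiag_comb k j w c (fun i => dot d (a i) (a j))
               (fun i => dot d (b i) (orth d y (b j)))).
  set (P3 := offdiag_comb k j w c (fun i => dot d (b i) (b j))
               (fun i => dot d (a i) (orth d x (a j)))).
  set (P4 := tform_I d T (orth d x (a j)) (orth d y (b j))).
  rewrite (vnorm_ext d _ (fun l => (sa * sb) * P1 l + sa * P2 l + sb * P3 l + P4 l))
    by (intros; unfold T; rewrite (tform_I_cp_orth_split d k w a b c j) by auto;
        unfold sa, sb, P1, P2, P3, P4, T; ring).
  pose proof (Rabs_dot_unit_le d x (a j) x_unit Haj) as Hsa.
  pose proof (Rabs_dot_unit_le d y (b j) y_unit Hbj) as Hsb. fold sa sb in Hsa, Hsb.
  assert (HP2 : vnorm d P2 <= M * (wmax * delta) * (M * eps)).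
  { apply vnorm_offdiag_cross_le; auto. intros; apply factors_unit; auto.
    intros; apply incoherent; auto. }
  assert (HP3 : vnorm d P3 <= M * (wmax * delta) * (M * eps)).
  { apply vnorm_offdiag_cross_le; auto. intros; apply factors_unit; auto.
    intros; apply incoherent; auto. }
  assert (HP4 : vnorm d P4 <= tnorm d T * eps * eps).
  { eapply Rle_trans; [apply vnorm_tform_I_le; exists x; exact x_unit|].
    pose proof (tnorm_nonneg d T (ex_intro _ x x_unit)).
    pose proof (vnorm_nonneg d (orth d x (a j))); pose proof (vnorm_nonneg d (orth d y (b j))).
    apply Rmult_le_compat; [apply Rmult_le_pos; lra|lra| |lra].
    apply Rmult_le_compat_l; lra. }
  pose proof (vnorm_nonneg d P1); pose proof (vnorm_nonneg d P2); pose proof (vnorm_nonneg d P3).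
  pose proof (Rabs_pos sa); pose proof (Rabs_pos sb).
  eapply Rle_trans; [apply vnorm_add_le|].
  eapply Rle_trans; [apply Rplus_le_compat_r, vnorm_add_le|].
  eapply Rle_trans; [apply Rplus_le_compat_r, Rplus_le_compat_r, vnorm_add_le|].
  rewrite !vnorm_scal, Rabs_mult.
  assert (Rabs sa * Rabs sb <= 1) by nra.
  nra.
Qed.

Lemma vnorm_perturbed_residual_le (Psi : tensor3) (alpha0 beta' K : R) :
  0 < alpha0 -> tnorm d T <= alpha0 * wmax -> eps <= beta' / alpha0 ->
  vnorm d (offdiag_comb k j w c (fun i => dot d (a i) (a j)) (fun i => dot d (b i) (b j))) <= K ->
  vnorm d (fun l => tform_I d (fun p q r => T p q r + Psi p q r) x y l
                    - w j * dot d x (a j) * dot d y (b j) * c j l)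
  <= tnorm d Psi + K + wmax * (2 * delta * (M * M) + beta') * eps.
Proof.
  intros Halpha0 HT Hbeta HK.
  assert (Heps : 0 <= eps) by (eapply Rle_trans; [apply vnorm_nonneg|exact orth_x_le]).
  assert (Halpha0_eps : alpha0 * eps <= beta').
  { apply (Rmult_le_compat_l alpha0) in Hbeta; [|lra].
    replace (alpha0 * (beta' / alpha0)) with beta' in Hbeta by (field; lra). exact Hbeta. }
  pose proof (w_pos j j_lt_k); pose proof (rmax_lt_ge k w j j_lt_k).
  pose proof (tnorm_nonneg d T (ex_intro _ x x_unit)).
  pose proof vnorm_cp_residual_le as Hres.
  pose proof (vnorm_tform_I_le d Psi x y (ex_intro _ x x_unit)) as HPsi.
  rewrite x_unit, y_unit, !Rmult_1_r in HPsi.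
  rewrite (vnorm_ext d _ (fun l => (tform_I d T x y l - w j * dot d x (a j) * dot d y (b j) * c j l)
                                   + tform_I d Psi x y l))
    by (intros; rewrite tform_I_add; ring).
  eapply Rle_trans; [apply vnorm_add_le|].
  assert (tnorm d T * eps * eps <= wmax * beta' * eps).
  { apply Rle_trans with (alpha0 * wmax * eps * eps).
    - repeat apply Rmult_le_compat_r; auto.
    - assert (0 <= wmax * eps) by (apply Rmult_le_pos; unfold wmax; lra). nra. }
  nra.
Qed.

Lemma Rabs_leading_coef_bounds : eps * eps <= 1 ->
  w j * (1 - eps * eps) <= Rabs (w j * dot d x (a j) * dot d y (b j)) <= w j.
Proof.
  intros Heps. destruct (factors_unit j j_lt_k) as (Haj & Hbj & _).
  pose proof (w_pos j j_lt_k).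
  rewrite Rmult_assoc, Rabs_mult, (Rabs_pos_eq (w j)) by lra.
  pose proof (Rabs_dot_mult_dot_ge d x (a j) y (b j) eps x_unit Haj y_unit Hbj orth_x_le orth_y_le Heps).
  pose proof (Rabs_dot_unit_le d x (a j) x_unit Haj).
  pose proof (Rabs_dot_unit_le d y (b j) y_unit Hbj).
  rewrite Rabs_mult in *. pose proof (Rabs_pos (dot d x (a j))); pose proof (Rabs_pos (dot d y (b j))).
  assert (Rabs (dot d x (a j)) * Rabs (dot d y (b j)) <= 1) by nra.
  split; [|rewrite <- (Rmult_1_r (w j)) at 2]; apply Rmult_le_compat_l; lra.
Qed.

Lemma cp_perturbation_estimates (Psi : tensor3) (alpha0 beta' K wmin : R) :
  0 < alpha0 -> tnorm d T <= alpha0 * wmax -> eps <= beta' / alpha0 ->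
  vnorm d (offdiag_comb k j w c (fun i => dot d (a i) (a j)) (fun i => dot d (b i) (b j))) <= K ->
  0 < wmin -> wmin <= w j -> wmax * (eps * eps) <= wmin / 6 ->
  let That : tensor3 := fun p q r => T p q r + Psi p q r in
  let v := tform_I d That x y in
  let B := tnorm d Psi + K + wmax * (2 * delta * (M * M) + beta') * eps in
  vdist d (fun l => v l / vnorm d v) (c j) <= B / (wmin / 2) /\
  Rabs (tform d That x y (fun l => v l / vnorm d v) - w j) <= B + w j * (eps * eps).
Proof.
  intros Halpha0 HT Hbeta HK Hwmin Hwj Heps That v B.
  destruct (factors_unit j j_lt_k) as (_ & _ & Hcj).
  pose proof (rmax_lt_ge k w j j_lt_k).
  set (lam := w j * dot d x (a j) * dot d y (b j)).
  set (r := fun l => v l - lam * c j l).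
  assert (Hv : forall l, v l = lam * c j l + r l) by (intros; unfold r; ring).
  assert (Hr : vnorm d r <= B) by (apply vnorm_perturbed_residual_le with (alpha0 := alpha0); auto).
  destruct Rabs_leading_coef_bounds as [Hlam1 Hlam2]; [unfold wmax in *; nra|].
  fold lam in Hlam1, Hlam2.
  split.
  - apply (vdist_normalize_le d v (c j) r lam Hcj Hv); unfold wmax in *; nra.
  - unfold v. rewrite tform_normalize. fold v.
    pose proof (Rabs_vnorm_sub_le d v (c j) r lam Hcj Hv).
    pose proof (Rle_abs (vnorm d v - Rabs lam)).
    pose proof (Rle_abs (- (vnorm d v - Rabs lam))). rewrite Rabs_Ropp in *.
    apply Rabs_le. nra.
Qed.

End PerturbedCPTensor.

Theorem mainTheorem2
  (d k : nat) (w : nat -> R) (a b c : nat -> vec)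
  (alpha alpha0 beta' : R) (Psi : tensor3) (j : nat) (ahat bhat : vec) :
  0 < alpha -> 0 < alpha0 -> 0 < beta' ->
  (j < k)%nat ->
  (forall i, (i < k)%nat -> 0 < w i) ->
  (forall i, (i < k)%nat -> is_unit d (a i) /\ is_unit d (b i) /\ is_unit d (c i)) ->
  (forall i i', (i < k)%nat -> (i' < k)%nat -> i <> i' ->
     Rabs (dot d (a i) (a i')) <= alpha / sqrt (INR d) /\
     Rabs (dot d (b i) (b i')) <= alpha / sqrt (INR d) /\
     Rabs (dot d (c i) (c i')) <= alpha / sqrt (INR d)) ->
  Rmax (colmat_norm d k a) (Rmax (colmat_norm d k b) (colmat_norm d k c))
    <= 1 + alpha0 * sqrt (INR k / INR d) ->
  tnorm d (cp_tensor k w a b c) <= alpha0 * rmax_lt k w ->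
  (forall j', (j' < k)%nat ->
     vnorm d (fun l => rsum k (fun i => if Nat.eq_dec i j' then 0
              else w i * dot d (a i) (a j') * dot d (b i) (b j') * c i l))
     <= alpha * rmax_lt k w * sqrt (INR k) / INR d) ->
  let wmax := rmax_lt k w in
  let wmin := rmin_lt k w in
  let q := 2 * wmax / wmin *
           (2 * alpha / sqrt (INR d) * (1 + alpha0 * sqrt (INR k / INR d)) ^ 2 + beta') in
  q < 1 / 2 ->
  let psi := tnorm d Psi in
  psi <= wmin / 6 ->
  let T := cp_tensor k w a b c in
  let That : tensor3 := fun p q' r => T p q' r + Psi p q' r in
  is_unit d ahat -> is_unit d bhat ->
  let eps0 := Rmax (vdist d ahat (a j)) (vdist d bhat (b j)) in
  eps0 <= Rmin (Rmin (beta' / alpha0) (sqrt (wmin / (6 * wmax))))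
               (Rmin (wmin * q / (4 * wmax))
                     (2 * wmax / (wmin * q) *
                        (wmin / (6 * wmax) - alpha * sqrt (INR k) / INR d))) ->
  let v := tform_I d That ahat bhat in
  let chat : vec := fun l => v l / vnorm d v in
  let Const := 2 / wmin * (psi + wmax * alpha * sqrt (INR k) / INR d) in
  vdist d chat (c j) <= Const + q * eps0 /\
  (vdist d chat (c j) <= eps0 ->
     Rabs (tform d That ahat bhat chat - w j) <= wmin / 2 * Const + wmin * q * eps0).
Proof.
  intros Halpha Halpha0 _ Hj Hw Hunit Hinc Hcol HT Hoff wmax wmin q _ psi _ T That
    Hahat Hbhat eps0 Heps v chat Const.
  destruct (Hunit j Hj) as (Haj & Hbj & _).
  destruct (Rmax3_le _ _ _ _ Hcol) as (Hca & Hcb & Hcc).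
  pose proof (rmin_lt_pos k w ltac:(lia) Hw) as Hwmin; fold wmin in Hwmin.
  pose proof (rmin_lt_le k w j Hj) as Hwj_min; fold wmin in Hwj_min.
  pose proof (rmax_lt_ge k w j Hj) as Hwj_max; fold wmax in Hwj_max.
  set (M := 1 + alpha0 * sqrt (INR k / INR d)) in *.
  set (delta := alpha / sqrt (INR d)) in *.
  set (K := wmax * alpha * sqrt (INR k) / INR d) in *.
  assert (Heps0 : 0 <= eps0) by (eapply Rle_trans; [apply vdist_nonneg|apply Rmax_l]).
  pose proof (Rle_trans _ _ _ Heps (Rmin_l _ _)) as Heps_beta_sqrt.
  pose proof (Rle_trans _ _ _ (Rle_trans _ _ _ Heps (Rmin_r _ _)) (Rmin_l _ _)) as Heps_q.
  assert (Hq : wmax * (2 * delta * (M * M) + beta') = wmin * q / 2)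
    by (unfold q; replace (2 * alpha / sqrt (INR d)) with (2 * delta)
          by (unfold delta, Rdiv; ring); field; lra).
  destruct (cp_perturbation_estimates d k w a b c j delta M eps0 ahat bhat)
    with (Psi := Psi) (alpha0 := alpha0) (beta' := beta') (K := K) (wmin := wmin)
    as [Hdist Hform]; auto.
  - apply Rdiv_sqrt_nonneg; lra.
  - intros i Hi Hij. destruct (Hinc i j Hi Hj Hij) as (? & ? & _); auto.
  - eapply Rle_trans; [apply vnorm_orth_le_vdist|apply Rmax_l]; auto.
  - eapply Rle_trans; [apply vnorm_orth_le_vdist|apply Rmax_r]; auto.
  - eapply Rle_trans; [exact Heps_beta_sqrt|apply Rmin_l].
  - eapply Rle_trans; [apply (Hoff j Hj)|]. right; unfold K, wmax, Rdiv; ring.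
  - fold wmax. apply Rmult_le_of_le_div; [lra|lra|].
    apply Rsqr_le_of_le_sqrt; [lra|apply Rlt_le, Rdiv_lt_0_compat; lra|].
    eapply Rle_trans; [exact Heps_beta_sqrt|apply Rmin_r].
  - assert (Hwq : wmax * eps0 <= wmin * q / 4) by (apply Rmult_le_of_le_div; [lra|lra|auto]).
    fold wmax in Hdist, Hform. rewrite Hq in Hdist, Hform. split.
    + eapply Rle_trans; [exact Hdist|]. right. unfold Const, psi. field. lra.
    + intros _. eapply Rle_trans; [exact Hform|].
      replace (wmin / 2 * Const) with (psi + K) by (unfold Const; field; lra).
      assert (w j * (eps0 * eps0) <= eps0 * (wmax * eps0))
        by (replace (eps0 * (wmax * eps0)) with (wmax * (eps0 * eps0)) by ring;
            apply Rmult_le_compat_r; nra).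
      assert (eps0 * (wmax * eps0) <= eps0 * (wmin * q / 4)) by (apply Rmult_le_compat_l; lra).
      assert (0 <= w j * (eps0 * eps0)) by (apply Rmult_le_pos; nra).
      unfold psi; lra.
Qed.
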